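(* Let $\boldsymbol\beta\in\mathbb R^p$ have support $\mathcal A$ with $\boldsymbol z_{\mathcal A}=\mathbf 1$ (all nonzero entries positive), let $\lambda>0$, and let $\tilde{\mathbf Z}$ be any $p\times p$ diagonal matrix with diagonal entries in $\{-1,+1\}$; put $\tilde{\boldsymbol\beta}=\tilde{\mathbf Z}\boldsymbol\beta$. Then for every design $\mathbf X$, $\phi_\lambda(\mathbf X\mid\tilde{\boldsymbol\beta})=\phi_\lambda(\mathbf X\tilde{\mathbf Z}\mid\boldsymbol\beta)$. Moreover, if $\mathbf X^*$ maximizes $\phi_\lambda(\cdot\mid\boldsymbol\beta)$ over all designs, then $\mathbf X^*\tilde{\mathbf Z}$ maximizes $\phi_\lambda(\cdot\mid\tilde{\boldsymbol\beta})$ over all designs.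
   Context: A design is an $n\times p$ matrix $\mathbf X$ with entries in $\{-1,+1\}$. Let $\mathbf P_1=n^{-1}\mathbf 1\mathbf 1^T$, let $\mathbf V$ be the diagonal matrix whose diagonal entries are those of $n^{-1}\mathbf X^T(\mathbf I-\mathbf P_1)\mathbf X$, let $\mathbf F=(\mathbf I-\mathbf P_1)\mathbf X\mathbf V^{-1/2}$ and $\mathbf C=n^{-1}\mathbf F^T\mathbf F$. For $\boldsymbol\beta\in\mathbb R^p$, its support is $\mathcal A=\{j:\beta_j\neq0\}$ with $|\mathcal A|=k\ge1$, $\mathcal I$ is the complement, $\boldsymbol z=\mathrm{sign}(\boldsymbol\beta)$, $\mathbf Z_{\mathcal A}=\mathrm{Diag}(\boldsymbol z_{\mathcal A})$. Subscripts: $\mathbf F_{\mathcal T}$ = columns in $\mathcal T$; $\boldsymbol w_{\mathcal T}$ = subvector; $\mathbf M_{\mathcal U\mathcal T}$ = rows $\mathcal U$, columns $\mathcal T$; $\mathbf M_{\mathcal T}=\mathbf M_{\mathcal T\mathcal T}$. Designs considered are those with $\mathbf C_{\mathcal A}$ invertible and positive diagonal of $\mathbf V_{\mathcal A}$. Let $\mathbf P_{\mathcal A}=\mathbf F_{\mathcal A}(\mathbf F_{\mathcal A}^T\mathbf F_{\mathcal A})^{-1}\mathbf F_{\mathcal A}^T$, $\lambda_n=\lambda\sqrt n$, $\boldsymbol e\sim N(\mathbf 0,\mathbf I_n)$, $\boldsymbol u=-n^{-1/2}\mathbf Z_{\mathcal A}\mathbf C_{\mathcal A}^{-1}\mathbf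 F_{\mathcal A}^T\boldsymbol e+\lambda_n\mathbf Z_{\mathcal A}\mathbf C_{\mathcal A}^{-1}\boldsymbol z_{\mathcal A}$, $\boldsymbol v=n^{-1/2}\mathbf F_{\mathcal I}^T(\mathbf I-\mathbf P_{\mathcal A})\boldsymbol e+\lambda_n\mathbf C_{\mathcal I\mathcal A}\mathbf C_{\mathcal A}^{-1}\boldsymbol z_{\mathcal A}$, $S_\lambda=\{\boldsymbol u<\sqrt n\,\mathbf Z_{\mathcal A}\mathbf V_{\mathcal A}^{1/2}\boldsymbol\beta_{\mathcal A}\}$ and $I_\lambda=\{|\boldsymbol v|\le\lambda_n\mathbf 1\}$ (componentwise). The sign recovery criterion of design $\mathbf X$ under $\boldsymbol\beta$ is $\phi_\lambda(\mathbf X\mid\boldsymbol\beta)=P(S_\lambda\cap I_\lambda)$, with all quantities computed from $\mathbf X$ and $\boldsymbol\beta$. *)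

From HB Require Import structures.
From mathcomp Require Import all_boot all_order all_algebra.
From mathcomp Require Import all_classical all_reals all_analysis.
From mathcomp Require Import normal_distribution.
Set Implicit Arguments. Unset Strict Implicit. Unset Printing Implicit Defensive.
Import Order.TTheory GRing.Theory Num.Theory.
Local Open Scope classical_set_scope.
Local Open Scope ring_scope.

Section Defs.
Variable R : realType.

Definition vcons (m : nat) (t : R) (x : 'I_m -> R) : 'I_m.+1 -> R :=
  fun i => match unlift ord0 i with Some j => x j | None => t end.

(* iterated integral of f against the standard Gaussian N(0,1) in each
   coordinate, i.e. integration against N(0, I_n) on R^n (product measure) *)
Fixpoint gauss_int (n : nat) : (('I_n -> R) -> \bar R) -> \bar R :=
  match n with
  | 0 => fun f => f (fun i => 0)
  | m.+1 => fun f =>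
      (\int[normal_prob (0:R) 1]_t gauss_int (fun x => f (vcons t x)))%E
  end.

Definition gauss_prob (n : nat) (E : set 'cV[R]_n) : \bar R :=
  gauss_int (fun x : 'I_n -> R => ((\1_E (\col_i x i) : R))%:E).

Variables (n p : nat).

Definition is_design (X : 'M[R]_(n, p)) : Prop :=
  forall i j, X i j = 1 \/ X i j = -1.

Definition support (beta : 'cV[R]_p) : {set 'I_p} := [set j | beta j 0 != 0].

Definition idxA (beta : 'cV[R]_p) (j : 'I_#|support beta|) : 'I_p := enum_val j.
Definition idxI (beta : 'cV[R]_p) (j : 'I_#|~: support beta|) : 'I_p := enum_val j.

Definition P1 : 'M[R]_n := (n%:R)^-1 *: const_mx 1.

Definition Vmat (X : 'M[R]_(n, p)) : 'M[R]_p :=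
  let M := (n%:R)^-1 *: (X^T *m (1%:M - P1) *m X) in
  \matrix_(i, j) ((i == j)%:R * M i j).
Definition Vpow_mhalf (X : 'M[R]_(n, p)) : 'M[R]_p :=
  \matrix_(i, j) ((i == j)%:R * (Num.sqrt (Vmat X i i))^-1).

Definition Fmat (X : 'M[R]_(n, p)) : 'M[R]_(n, p) :=
  (1%:M - P1) *m X *m Vpow_mhalf X.
Definition Cmat (X : 'M[R]_(n, p)) : 'M[R]_p :=
  (n%:R)^-1 *: ((Fmat X)^T *m Fmat X).

Section Crit.
Variables (lam : R) (X : 'M[R]_(n, p)) (beta : 'cV[R]_p).
Local Notation A := (support beta).
Definition F_A : 'M[R]_(n, #|A|) := colsub (@idxA beta) (Fmat X).
Definition F_I : 'M[R]_(n, #|~: A|) := colsub (@idxI beta) (Fmat X).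
Definition C_A : 'M[R]_#|A| := mxsub (@idxA beta) (@idxA beta) (Cmat X).
Definition C_IA : 'M[R]_(#|~: A|, #|A|) := mxsub (@idxI beta) (@idxA beta) (Cmat X).
Definition V_A : 'M[R]_#|A| := mxsub (@idxA beta) (@idxA beta) (Vmat X).
Definition V_A_half : 'M[R]_#|A| :=
  \matrix_(i, j) ((i == j)%:R * Num.sqrt (V_A i i)).
Definition beta_A : 'cV[R]_#|A| := rowsub (@idxA beta) beta.
Definition z_A : 'cV[R]_#|A| := \col_j Num.sg (beta_A j 0).
Definition Z_A : 'M[R]_#|A| := diag_mx (z_A^T).
Definition P_A : 'M[R]_n := F_A *m invmx (F_A^T *m F_A) *m F_A^T.
Definition lam_n : R := lam * Num.sqrt (n%:R).

Definition u_vec (e : 'cV[R]_n) : 'cV[R]_#|A| :=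
  - ((Num.sqrt (n%:R))^-1 *: (Z_A *m invmx C_A *m F_A^T *m e))
  + lam_n *: (Z_A *m invmx C_A *m z_A).
Definition v_vec (e : 'cV[R]_n) : 'cV[R]_#|~: A| :=
  (Num.sqrt (n%:R))^-1 *: (F_I^T *m (1%:M - P_A) *m e)
  + lam_n *: (C_IA *m invmx C_A *m z_A).

Definition S_event : set 'cV[R]_n :=
  [set e | forall j, u_vec e j 0 < (Num.sqrt (n%:R) *: (Z_A *m V_A_half *m beta_A)) j 0].
Definition I_event : set 'cV[R]_n :=
  [set e | forall j, `|v_vec e j 0| <= lam_n].

Definition phi_crit : \bar R := gauss_prob (S_event `&` I_event).

Definition admissible : Prop :=
  is_design X /\ C_A \in unitmx /\ (forall j, 0 < V_A j j).
End Crit.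

Definition is_maximizer (lam : R) (beta : 'cV[R]_p) (Xs : 'M[R]_(n, p)) : Prop :=
  admissible Xs beta /\
  forall X, admissible X beta -> (phi_crit lam X beta <= phi_crit lam Xs beta)%E.

End Defs.

From Pilot Require Import Defs.
From HB Require Import structures.
From mathcomp Require Import all_boot all_order all_algebra.
From mathcomp Require Import all_classical all_reals all_analysis.
Set Implicit Arguments. Unset Strict Implicit.
Import Order.TTheory GRing.Theory Num.Theory.
Local Open Scope ring_scope.

(* Multiplying the columns of X by the signs of Zt (with Zt^2 = I) leaves V
   unchanged and conjugates F and C by the corresponding restrictions of Zt.
   Since z_A = 1 for beta while Zt beta has sign vector Zt_A 1, every Zt in
   u(X Zt | beta) cancels against one in u(X | Zt beta), and v(X Zt | beta) is
   v(X | Zt beta) with the signs of its entries flipped.  So the events S and I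
   are the same sets of noise vectors and the two criteria coincide.  As
   X |-> X Zt is an involution preserving admissibility, it maps maximizers
   to maximizers. *)

Section DiagonalSignMatrices.
Variable R : pzRingType.

Definition sign_vector m (d : 'rV[R]_m) := forall j, d 0 j = 1 \/ d 0 j = -1.

Lemma sign_vector_mul_self m (d : 'rV[R]_m) j : sign_vector d -> d 0 j * d 0 j = 1.
Proof. by move=> d_sign; case: (d_sign j) => ->; rewrite ?mulrNN mulr1. Qed.

Lemma diag_sign_mulmx_self m (d : 'rV[R]_m) :
  sign_vector d -> diag_mx d *m diag_mx d = 1%:M.
Proof.
move=> d_sign; rewrite mulmx_diag; apply/matrixP => i j.
by rewrite !mxE sign_vector_mul_self.
Qed.

Lemma sign_vector_colsub m k (f : 'I_k -> 'I_m) (d : 'rV[R]_m) :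
  sign_vector d -> sign_vector (colsub f d).
Proof. by move=> d_sign j; rewrite mxE. Qed.

Lemma diag_conj_mxE m k (d : 'rV[R]_m) (M : 'M[R]_(m, k)) (e : 'rV[R]_k) i j :
  (diag_mx d *m M *m diag_mx e) i j = d 0 i * M i j * e 0 j.
Proof. by rewrite mul_mx_diag mxE mul_diag_mx mxE. Qed.

Lemma colsub_mul_diag m k l (f : 'I_l -> 'I_k) (M : 'M[R]_(m, k)) (d : 'rV[R]_k) :
  colsub f (M *m diag_mx d) = colsub f M *m diag_mx (colsub f d).
Proof. by apply/matrixP => i j; rewrite !mul_mx_diag !mxE. Qed.

Lemma rowsub_diag_mul m k l (f : 'I_l -> 'I_m) (d : 'rV[R]_m) (M : 'M[R]_(m, k)) :
  rowsub f (diag_mx d *m M) = diag_mx (colsub f d) *m rowsub f M.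
Proof. by apply/matrixP => i j; rewrite !mul_diag_mx !mxE. Qed.

Lemma mxsub_diag_conj m k l1 l2 (f : 'I_l1 -> 'I_m) (g : 'I_l2 -> 'I_k)
    (d : 'rV[R]_m) (M : 'M[R]_(m, k)) (e : 'rV[R]_k) :
  mxsub f g (diag_mx d *m M *m diag_mx e)
  = diag_mx (colsub f d) *m mxsub f g M *m diag_mx (colsub g e).
Proof. by apply/matrixP => i j; rewrite diag_conj_mxE mxE diag_conj_mxE !mxE. Qed.

Lemma diag_mul_const1 m (d : 'rV[R]_m) : diag_mx d *m const_mx 1 = d^T.
Proof. by apply/matrixP => i j; rewrite mul_diag_mx !mxE (ord1 j) mulr1. Qed.

End DiagonalSignMatrices.

Lemma diag_sign_unitmx (R : comUnitRingType) m (d : 'rV[R]_m) :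
  sign_vector d -> diag_mx d \in unitmx.
Proof. by move/diag_sign_mulmx_self/mulmx1_unit=> []. Qed.

Lemma invmx_conj (R : comUnitRingType) m (S M : 'M[R]_m) :
  S *m S = 1%:M -> invmx (S *m M *m S) = S *m invmx M *m S.
Proof.
move=> SS; have [S_unit _] := mulmx1_unit SS.
have [M_unit|M_nunit] := boolP (M \in unitmx); last first.
  by rewrite !invmx_out // inE !unitmx_mul S_unit (negbTE M_nunit).
have SMS_unit : S *m M *m S \in unitmx by rewrite !unitmx_mul S_unit M_unit.
have SMS_inv : (S *m M *m S) *m (S *m invmx M *m S) = 1%:M.
  by rewrite !mulmxA -(mulmxA _ S S) SS mulmx1 -(mulmxA _ M) mulmxV // mulmx1.
by rewrite -[RHS]mul1mx -(mulVmx SMS_unit) -(mulmxA (invmx _)) SMS_inv mulmx1.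
Qed.

Section SignFlippedDesign.
Variables (R : realType) (n p : nat) (s : 'rV[R]_p).
Hypothesis s_sign : sign_vector s.
Local Notation Z := (diag_mx s).

Lemma Vmat_flip (X : 'M[R]_(n, p)) : Vmat (X *m Z) = Vmat X.
Proof.
rewrite /Vmat trmx_mul tr_diag_mx.
set N := X^T *m (1%:M - @P1 R n) *m X.
have -> : Z *m X^T *m (1%:M - @P1 R n) *m (X *m Z) = Z *m N *m Z.
  by rewrite !mulmxA.
apply/matrixP => i j; rewrite mxE [RHS]mxE.
case: eqVneq => [<-|_]; last by rewrite !mul0r.
rewrite mxE [in RHS]mxE diag_conj_mxE [s 0 i * _]mulrC -mulrA.
by rewrite sign_vector_mul_self // mulr1.
Qed.

Lemma Vpow_mhalf_diag_comm (d : 'rV[R]_p) (X : 'M[R]_(n, p)) :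
  diag_mx d *m Vpow_mhalf X = Vpow_mhalf X *m diag_mx d.
Proof.
apply/matrixP => i j; rewrite mul_diag_mx mul_mx_diag !mxE.
by case: eqVneq => [->|_]; rewrite ?[d 0 j * _]mulrC // !mul0r mulr0.
Qed.

Lemma Fmat_flip (X : 'M[R]_(n, p)) : Fmat (X *m Z) = Fmat X *m Z.
Proof. by rewrite /Fmat /Vpow_mhalf Vmat_flip -!mulmxA -Vpow_mhalf_diag_comm. Qed.

Lemma Cmat_flip (X : 'M[R]_(n, p)) : Cmat (X *m Z) = Z *m Cmat X *m Z.
Proof.
rewrite /Cmat Fmat_flip trmx_mul tr_diag_mx.
by rewrite -scalemxAr -scalemxAl !mulmxA.
Qed.

Lemma is_design_flip (X : 'M[R]_(n, p)) : is_design X -> is_design (X *m Z).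
Proof.
move=> X_design i j; rewrite mul_mx_diag mxE.
case: (X_design i j) (s_sign j) => -> [] ->;
  rewrite ?mulr1 ?mulrN1 ?mulN1r ?opprK; by [left | right].
Qed.

End SignFlippedDesign.

(* The support of Zt beta equals that of beta only propositionally, while the
   dimensions of the matrices in the criterion depend on it.  We therefore
   restate the criterion with the active set A as a parameter; at
   A := support beta it is convertible to the one of Defs. *)
Section ActiveSetCriterion.
Variables (R : realType) (n p : nat) (A : {set 'I_p}).

Definition idx_on (j : 'I_#|A|) : 'I_p := enum_val j.
Definition idx_off (j : 'I_#|~: A|) : 'I_p := enum_val j.

Variables (lam : R) (X : 'M[R]_(n, p)) (b : 'cV[R]_p).

Definition F_on : 'M[R]_(n, #|A|) := colsub idx_on (Fmat X).
Definition F_off : 'M[R]_(n, #|~: A|) := colsub idx_off (Fmat X).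
Definition C_on : 'M[R]_#|A| := mxsub idx_on idx_on (Cmat X).
Definition C_offon : 'M[R]_(#|~: A|, #|A|) := mxsub idx_off idx_on (Cmat X).
Definition V_on : 'M[R]_#|A| := mxsub idx_on idx_on (Vmat X).
Definition V_on_half : 'M[R]_#|A| :=
  \matrix_(i, j) ((i == j)%:R * Num.sqrt (V_on i i)).
Definition beta_on : 'cV[R]_#|A| := rowsub idx_on b.
Definition z_on : 'cV[R]_#|A| := \col_j Num.sg (beta_on j 0).
Definition Z_on : 'M[R]_#|A| := diag_mx z_on^T.
Definition P_on : 'M[R]_n := F_on *m invmx (F_on^T *m F_on) *m F_on^T.

Definition u_on (e : 'cV[R]_n) : 'cV[R]_#|A| :=
  - ((Num.sqrt n%:R)^-1 *: (Z_on *m invmx C_on *m F_on^T *m e))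
  + lam_n n lam *: (Z_on *m invmx C_on *m z_on).
Definition v_on (e : 'cV[R]_n) : 'cV[R]_#|~: A| :=
  (Num.sqrt n%:R)^-1 *: (F_off^T *m (1%:M - P_on) *m e)
  + lam_n n lam *: (C_offon *m invmx C_on *m z_on).

Definition S_on : set 'cV[R]_n :=
  [set e | forall j,
    u_on e j 0 < (Num.sqrt n%:R *: (Z_on *m V_on_half *m beta_on)) j 0].
Definition I_on : set 'cV[R]_n := [set e | forall j, `|v_on e j 0| <= lam_n n lam].

End ActiveSetCriterion.

Lemma phi_critE (R : realType) n p lam (X : 'M[R]_(n, p)) b :
  phi_crit lam X b
  = gauss_prob (S_on (Defs.support b) lam X b `&` I_on (Defs.support b) lam X b).
Proof. by []. Qed.

Lemma admissibleE (R : realType) n p (X : 'M[R]_(n, p)) b :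
  admissible X b = (is_design X /\ C_on (Defs.support b) X \in unitmx
                    /\ forall j, 0 < V_on (Defs.support b) X j j).
Proof. by []. Qed.

Section FlipOnActiveSet.
Variables (R : realType) (n p : nat) (A : {set 'I_p}) (s : 'rV[R]_p).
Hypothesis s_sign : sign_vector s.
Local Notation Z := (diag_mx s).
Local Notation sA := (colsub (@idx_on p A) s).
Local Notation ZA := (diag_mx sA).
Local Notation ZI := (diag_mx (colsub (@idx_off p A) s)).

Let sA_sign : sign_vector sA := sign_vector_colsub _ s_sign.
Let ZA_mul_self : ZA *m ZA = 1%:M := diag_sign_mulmx_self sA_sign.

Lemma F_on_flip (X : 'M[R]_(n, p)) : F_on A (X *m Z) = F_on A X *m ZA.
Proof. by rewrite /F_on Fmat_flip // colsub_mul_diag. Qed.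

Lemma F_off_flip (X : 'M[R]_(n, p)) : F_off A (X *m Z) = F_off A X *m ZI.
Proof. by rewrite /F_off Fmat_flip // colsub_mul_diag. Qed.

Lemma C_on_flip (X : 'M[R]_(n, p)) : C_on A (X *m Z) = ZA *m C_on A X *m ZA.
Proof. by rewrite /C_on Cmat_flip // mxsub_diag_conj. Qed.

Lemma C_offon_flip (X : 'M[R]_(n, p)) :
  C_offon A (X *m Z) = ZI *m C_offon A X *m ZA.
Proof. by rewrite /C_offon Cmat_flip // mxsub_diag_conj. Qed.

Lemma V_on_flip (X : 'M[R]_(n, p)) : V_on A (X *m Z) = V_on A X.
Proof. by rewrite /V_on Vmat_flip. Qed.

Lemma V_on_half_flip (X : 'M[R]_(n, p)) : V_on_half A (X *m Z) = V_on_half A X.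
Proof. by rewrite /V_on_half V_on_flip. Qed.

Lemma P_on_flip (X : 'M[R]_(n, p)) : P_on A (X *m Z) = P_on A X.
Proof.
rewrite /P_on F_on_flip trmx_mul tr_diag_mx; set F := F_on A X.
have -> : ZA *m F^T *m (F *m ZA) = ZA *m (F^T *m F) *m ZA by rewrite !mulmxA.
rewrite invmx_conj //; set G := invmx _.
rewrite !mulmxA -(mulmxA F ZA ZA) ZA_mul_self mulmx1.
by rewrite -(mulmxA (F *m G) ZA ZA) ZA_mul_self mulmx1.
Qed.

Variable b : 'cV[R]_p.
Hypothesis b_pos : forall j : 'I_#|A|, 0 < b (idx_on j) 0.

Lemma beta_on_flip : beta_on A (Z *m b) = ZA *m beta_on A b.
Proof. exact: rowsub_diag_mul. Qed.

Lemma z_on_pos : z_on A b = const_mx 1.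
Proof. by apply/matrixP => i j; rewrite !mxE gtr0_sg. Qed.

Lemma z_on_flip : z_on A (Z *m b) = sA^T.
Proof.
apply/matrixP => i j.
rewrite mul_diag_mx !mxE sgrM (gtr0_sg (b_pos i)) (ord1 j) mulr1.
by case: (s_sign (idx_on i)) => ->; rewrite ?sgr1 ?sgrN1.
Qed.

Lemma Z_on_pos : Z_on A b = 1%:M.
Proof. by rewrite /Z_on z_on_pos trmx_const diag_const_mx. Qed.

Lemma Z_on_flip : Z_on A (Z *m b) = ZA.
Proof. by rewrite /Z_on z_on_flip trmxK. Qed.

Lemma u_on_flip lam (X : 'M[R]_(n, p)) e :
  u_on A lam X (Z *m b) e = u_on A lam (X *m Z) b e.
Proof.
rewrite /u_on F_on_flip C_on_flip Z_on_pos Z_on_flip z_on_pos z_on_flip.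
rewrite invmx_conj // trmx_mul tr_diag_mx !mul1mx.
congr (- (_ *: _) + _ *: _).
  by rewrite !mulmxA -(mulmxA _ ZA ZA) ZA_mul_self mulmx1.
by rewrite -!mulmxA diag_mul_const1.
Qed.

Lemma threshold_flip (X : 'M[R]_(n, p)) :
  Z_on A (Z *m b) *m V_on_half A X *m beta_on A (Z *m b)
  = Z_on A b *m V_on_half A (X *m Z) *m beta_on A b.
Proof.
rewrite Z_on_flip Z_on_pos beta_on_flip V_on_half_flip mul1mx.
have -> : V_on_half A X = diag_mx (\row_i Num.sqrt (V_on A X i i)).
  apply/matrixP => i j; rewrite !mxE.
  by case: eqVneq => [->|_]; rewrite ?mul1r ?mul0r ?mulr1n ?mulr0n.
apply/matrixP => i j; rewrite -!mulmxA !mul_diag_mx !mxE mulrCA; congr (_ * _).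
by rewrite mulrA sign_vector_mul_self // mul1r.
Qed.

Lemma S_on_flip lam (X : 'M[R]_(n, p)) :
  S_on A lam X (Z *m b) = S_on A lam (X *m Z) b.
Proof.
by rewrite /S_on threshold_flip; apply: funext => e /=; rewrite u_on_flip.
Qed.

Lemma v_on_flip lam (X : 'M[R]_(n, p)) e :
  v_on A lam (X *m Z) b e = ZI *m v_on A lam X (Z *m b) e.
Proof.
rewrite /v_on P_on_flip F_off_flip C_on_flip C_offon_flip z_on_pos z_on_flip.
rewrite invmx_conj // trmx_mul tr_diag_mx [RHS]mulmxDr -!(scalemxAr _ ZI).
congr (_ *: _ + _ *: _); first by rewrite !mulmxA.
by rewrite !mulmxA -(mulmxA _ ZA ZA) ZA_mul_self mulmx1 -mulmxA diag_mul_const1.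
Qed.

Lemma I_on_flip lam (X : 'M[R]_(n, p)) :
  I_on A lam X (Z *m b) = I_on A lam (X *m Z) b.
Proof.
have v_norm e j : `|v_on A lam (X *m Z) b e j 0| = `|v_on A lam X (Z *m b) e j 0|.
  rewrite v_on_flip mul_diag_mx mxE normrM mxE.
  by case: (s_sign (idx_off j)) => ->; rewrite ?normr1 ?normrN1 mul1r.
rewrite /I_on; apply: funext => e /=; apply: propext.
by split=> v_le j; [rewrite v_norm | rewrite -v_norm]; apply: v_le.
Qed.

End FlipOnActiveSet.

Lemma support_flip (R : realType) p (s : 'rV[R]_p) (b : 'cV[R]_p) :
  sign_vector s -> Defs.support (diag_mx s *m b) = Defs.support b.
Proof.
move=> s_sign; apply/setP => j; rewrite !inE mul_diag_mx mxE mulf_eq0 negb_or.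
by case: (s_sign j) => ->; rewrite ?oppr_eq0 oner_neq0.
Qed.

Lemma phi_crit_flip (R : realType) n p lam (s : 'rV[R]_p) (b : 'cV[R]_p)
    (X : 'M[R]_(n, p)) :
  sign_vector s -> (forall j, b j 0 != 0 -> 0 < b j 0) ->
  phi_crit lam X (diag_mx s *m b) = phi_crit lam (X *m diag_mx s) b.
Proof.
move=> s_sign b_pos; rewrite !phi_critE support_flip //.
have b_pos_on (j : 'I_#|Defs.support b|) : 0 < b (idx_on j) 0.
  by have := enum_valP j; rewrite inE => /b_pos.
by rewrite S_on_flip // I_on_flip.
Qed.

Lemma admissible_flip (R : realType) n p (s : 'rV[R]_p) (b : 'cV[R]_p)
    (X : 'M[R]_(n, p)) :
  sign_vector s -> admissible X (diag_mx s *m b) <-> admissible (X *m diag_mx s) b.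
Proof.
move=> s_sign; rewrite !admissibleE support_flip // C_on_flip // V_on_flip //.
rewrite !unitmx_mul (diag_sign_unitmx (sign_vector_colsub _ s_sign)) andbT.
split=> -[X_design C_V]; split=> //; first exact: is_design_flip.
by rewrite -[X]mulmx1 -(diag_sign_mulmx_self s_sign) mulmxA; apply: is_design_flip.
Qed.

Theorem theorem1 (R : realType) (n p : nat) (beta : 'cV[R]_p) (lam : R)
    (s : 'rV[R]_p) :
  (exists j, beta j 0 != 0) ->
  (forall j, beta j 0 != 0 -> 0 < beta j 0) ->
  0 < lam ->
  (forall j, s 0 j = 1 \/ s 0 j = -1) ->
  let Zt := diag_mx s in
  let betat := Zt *m beta in
  (forall X : 'M[R]_(n, p), admissible X betat ->
     phi_crit lam X betat = phi_crit lam (X *m Zt) beta) /\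
  (forall Xs : 'M[R]_(n, p), is_maximizer lam beta Xs ->
     is_maximizer lam betat (Xs *m Zt)).
Proof.
move=> _ beta_pos _ s_sign Zt betat; rewrite {}/betat {}/Zt.
have flipK (X : 'M[R]_(n, p)) : X *m diag_mx s *m diag_mx s = X.
  by rewrite -mulmxA diag_sign_mulmx_self // mulmx1.
split=> [X _|Xs [Xs_adm Xs_max]]; first exact: phi_crit_flip.
split=> [|X /(admissible_flip _ _ s_sign) X_adm].
  by apply/(admissible_flip _ _ s_sign); rewrite flipK.
by rewrite !(phi_crit_flip lam _ s_sign beta_pos) flipK; apply: Xs_max.
Qed.
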